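(* Let $k,t$ be positive integers with $t\geq k$. Let $D'$ be an $n$-vertex digraph and $\sigma$ an ordering of $V(D')$ such that $D'$ is $(\sigma,k,t)$-good. Then for every set $S \subseteq V(D')$ of $k-1$ vertices and every $v \in V(D')\setminus S$, there exist a directed path in $D'-S$ from $v$ to a vertex of $\sigma(n-t+1,n)$ and a directed path in $D'-S$ from a vertex of $\sigma(1,t)$ to $v$.
   Context: For an ordering $\sigma = (v_1,\dots, v_n)$ of the vertices of a digraph, an arc from $v_i$ to $v_j$ is $\sigma$-forward if $i<j$. For integers $a,b$, $\sigma(a,b) := \{ v_{\ell} : a\leq \ell \leq b, \ell \in \{1,\dots,n\}\}$. For positive integers $k,t$, an $n$-vertex digraph $D$ with ordering $\sigma$ of $V(D)$ is $(\sigma,k,t)$-good if: (D1) every arc of $D$ is $\sigma$-forward; (D2) every vertex in $\sigma(1,n-t)$ has out-degree at least $k$ in $D$; (D3) every vertex in $\sigma(t+1,n)$ has in-degree at least $k$ in $D$. A path may consist of a single vertex. $D'-S$ denotes the digraph obtained by deleting $S$. *)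

From mathcomp Require Import all_boot.
Set Implicit Arguments. Unset Strict Implicit. Unset Printing Implicit Defensive.

(* An ordering sigma = (v_1,...,v_n) of V is a bijection sigma : 'I_n -> V,
   with v_(i+1) = sigma i (0-based ordinals, 1-based positions). *)

Definition seg (V : finType) (n : nat) (sigma : 'I_n -> V) (a b : nat) : {set V} :=
  [set sigma i | i : 'I_n & (a <= i.+1 <= b)].

Definition outdeg (V : finType) (D : rel V) (v : V) : nat := #|[set w | D v w]|.
Definition indeg (V : finType) (D : rel V) (v : V) : nat := #|[set w | D w v]|.

Definition good (V : finType) (n : nat) (D : rel V) (sigma : 'I_n -> V) (k t : nat) : Prop :=
  [/\ (forall i j : 'I_n, D (sigma i) (sigma j) -> i < j),
      (forall v, v \in seg sigma 1 (n - t) -> k <= outdeg D v) &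
      (forall v, v \in seg sigma t.+1 n -> k <= indeg D v)].

Definition dpath_avoid (V : finType) (D : rel V) (S : {set V}) (x : V) (p : seq V) : Prop :=
  [/\ path D x p, uniq (x :: p) & all (fun y => y \notin S) (x :: p)].

From mathcomp Require Import all_boot.
From mathcomp Require Import zify.

Set Implicit Arguments.
Unset Strict Implicit.
Unset Printing Implicit Defensive.

(* Arcs go forward in sigma, so greedily following out-arcs that avoid S
   strictly increases the position and must stop, and it can only stop at a
   vertex of the last t positions: every earlier vertex has out-degree at
   least k > |S|, hence an out-neighbour outside S.  Paths built this way are
   automatically simple.  The backward path is the same walk in the converse
   digraph, using in-degrees, read in reverse. *)

Lemma exists_notin_of_card_lt (T : finType) (A S : {set T}) :
  #|S| < #|A| -> exists2 w, w \in A & w \notin S.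
Proof.
move=> ltSA; apply/exists_inP; rewrite -negb_forall_in; apply: contraTN ltSA.
by move=> /forall_inP subAS; rewrite -leqNgt subset_leq_card //; apply/subsetP.
Qed.

Section RankedWalks.

Variables (V : finType) (D : rel V) (r : V -> nat).
Hypothesis rank_decr : forall x y, D x y -> r y < r x.

Lemma path_rank_uniq x p : path D x p -> uniq (x :: p).
Proof.
move=> Dxp; apply: (@map_uniq _ _ r); apply: (sorted_uniq (leT := gtn)).
- by move=> a b c /= ab ca; apply: ltn_trans ca ab.
- by move=> a; rewrite /= ltnn.
by rewrite /= path_map; apply: sub_path Dxp => a b /rank_decr.
Qed.

Lemma dpath_avoid_to (S T : {set V}) :
  (forall x, x \notin S -> x \notin T -> exists2 y, D x y & y \notin S) ->
  forall x, x \notin S -> exists p, dpath_avoid D S x p /\ last x p \in T.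
Proof.
move=> escape x xS.
suff [p [Dxp Sxp Txp]] : exists p,
    [/\ path D x p, all (fun y => y \notin S) (x :: p) & last x p \in T].
  by exists p; split=> //; split=> //; apply: path_rank_uniq.
elim: {x}(r x).+1 {-2}x (ltnSn (r x)) xS => // m IHm x lt_xm xS.
have [xT | /(escape x xS)[y Dxy yS]] := boolP (x \in T).
  by exists [::]; rewrite /= xS.
have [|p [Dyp Syp Typ]] := IHm y _ yS; first exact: leq_trans (rank_decr Dxy) lt_xm.
by exists (y :: p); rewrite /= Dxy xS.
Qed.

End RankedWalks.

Lemma dpath_avoid_rev (V : finType) (D : rel V) (S : {set V}) x p :
  dpath_avoid (fun y z => D z y) S x p ->
  dpath_avoid D S (last x p) (rev (belast x p)) /\
  last (last x p) (rev (belast x p)) = x.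
Proof.
have revE : last x p :: rev (belast x p) = rev (x :: p).
  by rewrite [x :: p]lastI rev_rcons.
move=> [Dxp Uxp Sxp]; split; last first.
  by have := congr1 (last x) revE; rewrite /= rev_cons last_rcons.
by split; rewrite ?rev_path // revE ?rev_uniq ?all_rev.
Qed.

Lemma mem_seg (V : finType) n (sigma : 'I_n -> V) (g : V -> 'I_n) :
  cancel sigma g -> cancel g sigma ->
  forall a b x, (x \in seg sigma a b) = (a <= (g x).+1 <= b).
Proof.
move=> sigmaK gK a b x; apply/imsetP/idP => [[i ai ->] | abx].
  by rewrite sigmaK; move: ai; rewrite inE.
by exists (g x); rewrite ?inE ?gK.
Qed.

Theorem claim3p1 (V : finType) (n : nat) (D : rel V) (sigma : 'I_n -> V) (k t : nat) :
  0 < k -> 0 < t -> k <= t ->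
  bijective sigma ->
  good D sigma k t ->
  forall (S : {set V}) (v : V), #|S| = k - 1 -> v \notin S ->
    (exists p : seq V, dpath_avoid D S v p /\ last v p \in seg sigma (n - t + 1) n) /\
    (exists (u : V) (p : seq V), u \in seg sigma 1 t /\ dpath_avoid D S u p /\ last u p = v).
Proof.
move=> k_gt0 _ _ [g sigmaK gK] [forward outdeg_k indeg_k] S v cardS vS.
have segE := mem_seg sigmaK gK.
have arc_lt x y : D x y -> g x < g y by move=> Dxy; apply: forward; rewrite !gK.
have lt_n x := ltn_ord (g x).
have small_S (A : {set V}) : k <= #|A| -> exists2 w, w \in A & w \notin S.
  by move=> kA; apply: exists_notin_of_card_lt; lia.
split.
  apply: (dpath_avoid_to (r := fun x => n - g x)) vS => [x y /arc_lt|x _].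
    by have := lt_n y; lia.
  rewrite segE => xT; have /outdeg_k/small_S[y] : x \in seg sigma 1 (n - t).
    by rewrite segE; have := lt_n x; lia.
  by rewrite inE; exists y.
have [p [Dvp Tp]] :
    exists p, dpath_avoid (fun y z => D z y) S v p /\ last v p \in seg sigma 1 t.
  apply: (dpath_avoid_to (r := fun x => nat_of_ord (g x))) vS => [x y /arc_lt//|x _].
  rewrite segE => xT; have /indeg_k/small_S[y] : x \in seg sigma t.+1 n.
    by rewrite segE; have := lt_n x; lia.
  by rewrite inE; exists y.
have [rev_dpath rev_last] := dpath_avoid_rev Dvp.
by exists (last v p), (rev (belast v p)).
Qed.
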